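(* Let $G'$ be a connected graph and $x,v\in V(G')$ distinct vertices with $N_{G'}[x]\subseteq N_{G'}[v]$. If $T'$ is a search tree on $G'$ in which $v$ is a descendant of $x$, then $x$ has at most one child in $T'$ and $p(T',x)$ is a search tree on $G'-x$.
   Context: $N[\cdot]$ denotes the closed neighbourhood. For a connected graph $G$, a search tree on $G$ is a rooted tree with vertex set $V(G)$ defined recursively: its root is some vertex $r\in V(G)$, and the children of $r$ are the roots of search trees on the connected components of $G-r$. Elimination: for a rooted tree $T$ and a vertex $u$ with at most one child, $p(T,u)$ is the rooted tree obtained as follows: if $u$ is the root with child $c$, delete $u$ and make $c$ the root; if $u$ is not the root, has exactly one child $c$ and parent $b$, delete $u$ and add the edge $bc$ (root unchanged); if $u$ is a leaf, delete $u$ (root unchanged). *)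

From mathcomp Require Import all_boot.
Set Implicit Arguments. Unset Strict Implicit. Unset Printing Implicit Defensive.

(* A graph G' is represented as the subgraph induced on a vertex set
   S : {set T} of a simple graph (symmetric irreflexive e : rel T) on a
   finite type T.  G' - x is then the subgraph induced on S :\ x. *)

Section Graphs.
Variables (T : finType) (e : rel T).

Definition restr (S : {set T}) : rel T :=
  [rel a b | [&& a \in S, b \in S & e a b]].

Definition connected (S : {set T}) : Prop :=
  S != set0 /\ forall y z, y \in S -> z \in S -> connect (restr S) y z.

Definition comp (S : {set T}) (y : T) : {set T} :=
  [set z in S | connect (restr S) y z].

Definition components (S : {set T}) : {set {set T}} :=
  [set comp S y | y in S].

Definition cnbhd (S : {set T}) (x : T) : {set T} :=
  [set y in S | (y == x) || e x y].

(* Rooted trees are given by a root r and a parent map par : T -> option T;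
   the tree with vertex set S has par y = Some (parent of y) for y in S :\ r.
   [st par S r]: the rooted tree with root r, vertex set S and parent map par
   (restricted to S :\ r) is a search tree on G[S]:  G[S] is connected, r is
   the root, and the children of r are the roots of search trees on the
   components of G[S] - r (one per component). *)
Inductive st (par : T -> option T) : {set T} -> T -> Prop :=
| StNode (S : {set T}) (r : T) :
    r \in S ->
    connected S ->
    (forall y, y \in S :\ r -> exists2 z, par y = Some z & z \in S) ->
    (forall C, C \in components (S :\ r) ->
       exists c, [/\ c \in C, par c = Some r & st par C c]) ->
    st par S r.

Definition search_tree (S : {set T}) (r : T) (par : T -> option T) : Prop :=
  par r = None /\ st par S r.

Fixpoint up (par : T -> option T) (k : nat) (y : T) : option T :=
  match k with
  | 0 => Some y
  | k'.+1 => obind par (up par k' y)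
  end.

Definition descendant (par : T -> option T) (v x : T) : Prop :=
  exists2 k, 0 < k & up par k v = Some x.

Definition children (S : {set T}) (par : T -> option T) (u : T) : {set T} :=
  [set y in S | par y == Some u].

(* p(T,u) for the tree (S, r, par) and a vertex u with at most one child:
   returns (new root, new parent map); the new vertex set is S :\ u.
   - u root with child c: c becomes the root;
   - u non-root with child c and parent b: c gets parent b;
   - u a leaf: just delete u.
   (The root-leaf case, i.e. S = [set u], is left unspecified in the paper.) *)
Definition elim (S : {set T}) (r : T) (par : T -> option T) (u : T)
  : T * (T -> option T) :=
  match [pick y in S | par y == Some u] with
  | Some c =>
      if u == r then (c, fun y => if y == c then None else par y)
      else (r, fun y => if y == c then par u else par y)
  | None => (r, par)
  end.

End Graphs.

From mathcomp Require Import all_boot.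
Set Implicit Arguments. Unset Strict Implicit. Unset Printing Implicit Defensive.

(* Since every neighbour of x other than v is a neighbour of v, replacing x by
   v in a path of G' gives a path of G' - x, so G' - x is connected; this
   property passes to induced subgraphs containing x and v.  Induct on the
   search tree, rooted at w.  If x = w, then G' - x has a single component, so
   x has a single child c, the root of the search tree on G' - x.  Otherwise
   the ancestor chain from v to x stays in the component C of G' - w that
   contains x; by induction p(T'|C, x) is a search tree on C - x, and since the
   components of G' - w - x are C - x and the other components of G' - w,
   replacing the subtree on C by it yields a search tree on G' - x. *)

Lemma connect_homo (T1 T2 : finType) (e1 : rel T1) (e2 : rel T2) (f : T1 -> T2) :
  {homo f : a b / e1 a b >-> connect e2 a b} ->
  {homo f : a b / connect e1 a b >-> connect e2 a b}.
Proof.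
move=> fe a _ /connectP[p + ->]; elim: p a => [|b p IHp] a /=.
  by rewrite connect0.
by case/andP=> /fe ab /IHp; apply: connect_trans.
Qed.

Section SearchTreeElimination.
Variables (T : finType) (e : rel T).
Hypotheses (e_sym : symmetric e) (e_irr : irreflexive e).
Implicit Types (A B C D S : {set T}) (par : T -> option T).

Lemma restr_sym A : symmetric (restr e A).
Proof. by move=> a b; rewrite /restr /= e_sym andbCA. Qed.

Lemma connect_restrS A B a b : A \subset B ->
  connect (restr e A) a b -> connect (restr e B) a b.
Proof.
move=> /subsetP AB; apply: connect_sub => u w /and3P[uA wA euw].
by apply: connect1; apply/and3P; split; rewrite ?AB.
Qed.

Lemma comp_sub A y : comp e A y \subset A.
Proof. by apply/subsetP => z; rewrite inE => /andP[]. Qed.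

Lemma comp_refl A y : y \in A -> y \in comp e A y.
Proof. by move=> yA; rewrite inE yA connect0. Qed.

Lemma comp_eq A y z : z \in comp e A y -> comp e A z = comp e A y.
Proof.
rewrite inE => /andP[_ yz]; apply/setP => u; rewrite !inE.
by rewrite (same_connect (sym_connect_sym (restr_sym A)) yz).
Qed.

Lemma comp_components A y : y \in A -> comp e A y \in components e A.
Proof. exact: imset_f. Qed.

Lemma components_sub A C : C \in components e A -> C \subset A.
Proof. by case/imsetP => y _ ->; apply: comp_sub. Qed.

Lemma comp_connected A B C y : B \subset A -> C \subset B -> connected e C ->
  y \in C -> comp e A y :&: B \subset C -> comp e B y = C.
Proof.
move=> BA CB [_ connC] yC /subsetP compC; apply/setP => z; apply/idP/idP.
  rewrite inE => /andP[zB yz]; apply: compC.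
  by rewrite inE zB andbT inE (subsetP BA) //= (connect_restrS BA).
move=> zC; rewrite inE (subsetP CB) //=.
exact: connect_restrS CB (connC _ _ yC zC).
Qed.

Lemma comp_setD1_in A x y : connected e (comp e A x :\ x) ->
  y \in comp e A x :\ x -> comp e (A :\ x) y = comp e A x :\ x.
Proof.
move=> cC yC; have [_ yCx] := setD1P yC.
apply: comp_connected (subD1set _ _) (setSD _ (comp_sub _ _)) cC yC _.
by rewrite (comp_eq yCx); apply/subsetP => z /setIP[zC /setD1P[zx _]]; rewrite in_setD1 zx.
Qed.

Lemma comp_setD1_out A x y : y \in A -> x \notin comp e A y ->
  connected e (comp e A y) -> comp e (A :\ x) y = comp e A y.
Proof.
move=> yA xC cC; apply: comp_connected (subD1set _ _) _ cC (comp_refl yA) (subsetIl _ _).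
apply/subsetP => u uC; rewrite in_setD1 (subsetP (comp_sub _ _) _ uC) andbT.
by apply: contraNneq xC => <-.
Qed.

Lemma cnbhd_sub_restr A B x v : B \subset A ->
  cnbhd e A x \subset cnbhd e A v -> cnbhd e B x \subset cnbhd e B v.
Proof.
move=> /subsetP BA /subsetP hN; apply/subsetP => y; rewrite !inE => /andP[yB xy].
by have := hN y; rewrite !inE BA // xy yB => /(_ isT).
Qed.

Lemma connect_setD1_dominated D x v : v \in D :\ x ->
  cnbhd e D x \subset cnbhd e D v ->
  {in D :\ x &, forall y z, connect (restr e D) y z ->
                            connect (restr e (D :\ x)) y z}.
Proof.
move=> vDx /subsetP hN.
have nbx y : y \in D :\ x -> e x y -> connect (restr e (D :\ x)) v y.
  move=> yDx exy; have /hN : y \in cnbhd e D x.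
    by rewrite inE exy orbT (subsetP (subD1set D x)).
  rewrite inE => /andP[_ /orP[/eqP<-|evy]]; first exact: connect0.
  by apply: connect1; apply/and3P.
pose f y := if y == x then v else y.
have edge : {homo f : a b / restr e D a b >-> connect (restr e (D :\ x)) a b}.
  move=> a b /and3P[aD bD eab]; rewrite /f.
  case: (eqVneq a x) eab => [->|ax] eab; case: (eqVneq b x) => [bx|bx].
  - by rewrite bx e_irr in eab.
  - by apply: nbx; rewrite // in_setD1 bx.
  - rewrite (sym_connect_sym (restr_sym _)); apply: nbx; first by rewrite in_setD1 ax.
    by rewrite e_sym -bx.
  - by apply: connect1; rewrite /restr /= !in_setD1 ax bx aD bD.
have fid u : u \in D :\ x -> f u = u.
  by rewrite in_setD1 => /andP[ux _]; rewrite /f (negbTE ux).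
by move=> y z yDx zDx /(connect_homo edge); rewrite !fid.
Qed.

Lemma connected_setD1_dominated D x v : connected e D -> v \in D :\ x ->
  cnbhd e D x \subset cnbhd e D v -> connected e (D :\ x).
Proof.
move=> [_ cD] vDx hN; split; first by apply/set0Pn; exists v.
move=> y z yDx zDx; apply: (connect_setD1_dominated vDx hN yDx zDx).
by apply: cD; apply: (subsetP (subD1set D x)).
Qed.

Lemma st_inv par D w : st e par D w -> [/\ w \in D, connected e D,
    {in D :\ w, forall y, exists2 z, par y = Some z & z \in D} &
    forall C, C \in components e (D :\ w) ->
      exists c, [/\ c \in C, par c = Some w & st e par C c]].
Proof. by case. Qed.

Lemma st_ind_strong par (P : {set T} -> T -> Prop) :
  (forall D w, st e par D w ->
     (forall C, C \in components e (D :\ w) ->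
        exists c, [/\ c \in C, par c = Some w, st e par C c & P C c]) ->
     P D w) ->
  forall D w, st e par D w -> P D w.
Proof.
move=> IHst; fix IH 3 => D w stD; apply: (IHst _ _ stD).
case: stD => {}D {}w _ _ _ compD C /compD[c [cC pc stC]].
by exists c; split => //; apply: IH.
Qed.

Lemma eq_st par par' D w :
  {in D :\ w, par' =1 par} -> st e par D w -> st e par' D w.
Proof.
move=> + stD; elim/st_ind_strong: stD par' => {}D {}w stD IHcomp par' eqpar.
have [wD cD parD _] := st_inv stD.
constructor => // [y yDw|C CDw]; first by rewrite eqpar //; apply: parD.
have [c [cC pc _ IHC]] := IHcomp C CDw.
have /subsetP CDw' := components_sub CDw.
exists c; split => //; first by rewrite eqpar // CDw'.
by apply: IHC => y /setD1P[_ yC]; apply: eqpar; apply: CDw'.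
Qed.

Lemma st_par_neq par D w : st e par D w -> {in D :\ w, forall y, par y != Some y}.
Proof.
elim/st_ind_strong => {}D {}w _ IHcomp y yDw.
have [c [cC pc _ IHC]] := IHcomp _ (comp_components yDw).
have [yc|ync] := eqVneq y c; last by apply: IHC; rewrite in_setD1 ync comp_refl.
by rewrite yc pc; apply: contraTneq yDw => -[wc]; rewrite yc wc setD11.
Qed.

Lemma st_par_comp par D w y z : st e par D w -> y \in D :\ w ->
  par y = Some z -> z != w -> z \in comp e (D :\ w) y.
Proof.
move=> /st_inv[_ _ _ compD] yDw pyz zw.
have [c [_ pc /st_inv[_ _ parC _]]] := compD _ (comp_components yDw).
have [ycE|ync] := eqVneq y c.
  by move: pyz; rewrite ycE pc => -[wz]; rewrite wz eqxx in zw.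
have yC : y \in comp e (D :\ w) y :\ c by rewrite in_setD1 ync comp_refl.
have [z' pz' z'C] := parC y yC.
by move: pyz; rewrite pz' => -[<-].
Qed.

Lemma st_child_root par C c w y : st e par C c -> w \notin C ->
  y \in C -> par y = Some w -> y = c.
Proof.
move=> /st_inv[_ _ parC _] wC yC pyw; apply/eqP; apply: contraNT wC => ync.
have yCc : y \in C :\ c by rewrite in_setD1 ync.
by have [z] := parC y yCc; rewrite pyw => -[->].
Qed.

Lemma eq_children_set1 S par x c : c \in S -> par c = Some x ->
  {in S, forall y, par y = Some x -> y = c} -> children S par x = [set c].
Proof.
move=> cS pc c_uniq; apply/setP => y; rewrite !inE.
by apply/andP/eqP => [[yS /eqP /(c_uniq y yS)] | ->] //; rewrite cS pc.
Qed.

Lemma children_set1_mem S par x c :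
  children S par x = [set c] -> c \in S /\ par c = Some x.
Proof. by move=> chx; have := set11 c; rewrite -chx inE => /andP[? /eqP]. Qed.

Lemma children_set1_uniq S par x c y :
  children S par x = [set c] -> y \in S -> par y = Some x -> y = c.
Proof. by move=> chx yS pyx; apply/set1P; rewrite -chx inE yS pyx eqxx. Qed.

Lemma st_child_comp par D w x y : st e par D w ->
  (forall z, par w = Some z -> z \notin D) -> x \in D :\ w ->
  y \in D -> par y = Some x -> y \in comp e (D :\ w) x.
Proof.
move=> stD wroot xDw yD pyx; have [xw xD] := setD1P xDw.
have yw : y != w by apply: contraTneq xD => yw; apply: wroot; rewrite -yw.
have yDw : y \in D :\ w by rewrite in_setD1 yw.
by rewrite (comp_eq (st_par_comp stD yDw pyx xw)) comp_refl.
Qed.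

Definition parent_in par D : rel T :=
  [rel a b | [&& a \in D, b \in D & par a == Some b]].

Lemma connect_parent_in_up par S r v y k : search_tree e S r par -> v \in S ->
  up par k v = Some y -> connect (parent_in par S) v y.
Proof.
move=> [pr /st_inv[_ _ parS _]] vS.
suff upS : forall k y, up par k v = Some y -> y \in S /\ connect (parent_in par S) v y.
  by move=> /upS[].
elim=> [|{}k IHk] {}y /=; first by move=> [<-]; rewrite vS connect0.
case ukv: (up par k v) => [z|] //= pzy.
have [zS vz] := IHk z ukv.
have zr : z != r by apply/eqP => zr; move: pzy; rewrite zr pr.
have zSr : z \in S :\ r by rewrite in_setD1 zr zS.
have [y' pzy' y'S] := parS z zSr.
move: pzy; rewrite pzy' => -[<-]; split => //.
by apply: connect_trans vz (connect1 _); rewrite /parent_in /= zS y'S pzy' eqxx.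
Qed.

Lemma connect_parent_in_comp par D w x a : st e par D w ->
  (forall z, par w = Some z -> z \notin D) -> x \in D :\ w ->
  connect (parent_in par D) a x ->
  a \in comp e (D :\ w) x /\ connect (parent_in par (comp e (D :\ w) x)) a x.
Proof.
move=> stD wroot xDw /connectP[p]; elim: p a => [|b p IHp] a /=.
  by move=> _ xa; rewrite xa in xDw *; rewrite comp_refl ?connect0.
case/andP=> /and3P[aD bD /eqP pab] pb xl; have [bC bx] := IHp b pb xl.
have aw : a != w by apply: contraTneq bD => aw; apply: wroot; rewrite -aw.
have bw : b != w.
  by apply: contraTneq bC => ->; apply/negP => /(subsetP (comp_sub _ _)); rewrite setD11.
have aDw : a \in D :\ w by rewrite in_setD1 aw.
have aC : a \in comp e (D :\ w) x.
  by rewrite -(comp_eq bC) (comp_eq (st_par_comp stD aDw pab bw)) comp_refl.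
split => //; apply: connect_trans bx; apply: connect1.
by rewrite /parent_in /= aC bC pab eqxx.
Qed.

Definition reparent par (c : T) (b : option T) : T -> option T :=
  fun y => if y == c then b else par y.

Lemma st_setD1_root par D x : st e par D x ->
  (forall z, par x = Some z -> z \notin D) -> connected e (D :\ x) ->
  exists c, children D par x = [set c] /\ st e par (D :\ x) c.
Proof.
move=> stD xroot cDx; have [xD _ _ compD] := st_inv stD.
have [y yDx] := set0Pn _ cDx.1.
have compE : comp e (D :\ x) y = D :\ x.
  exact: comp_connected (subxx _) (subxx _) cDx yDx (subsetIr _ _).
have [c [cDx' pc stC]] := compD _ (comp_components yDx); rewrite compE in cDx' stC.
exists c; split => //.
apply: eq_children_set1 (subsetP (subD1set D x) _ cDx') pc _ => z zD pz.
have zx : z != x by apply: contraTneq xD => zx; apply: xroot; rewrite -{1}zx.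
by apply: st_child_root stC _ _ pz; rewrite ?setD11 ?in_setD1 ?zx.
Qed.

Lemma st_setD1_nonroot par D w x c c' :
  st e par D w -> x \in D :\ w -> connected e (D :\ x) ->
  children D par x = [set c] -> c \in comp e (D :\ w) x ->
  c' \in comp e (D :\ w) x :\ x -> reparent par c (par x) c' = Some w ->
  st e (reparent par c (par x)) (comp e (D :\ w) x :\ x) c' ->
  st e (reparent par c (par x)) (D :\ x) w.
Proof.
set Cx := comp e (D :\ w) x; set par' := reparent par c (par x).
move=> stD xDw cDx chx cCx c'Cx pc' stC'.
have [wD _ parD compD] := st_inv stD.
have [xw xD] : x != w /\ x \in D by apply/andP; rewrite -in_setD1.
constructor => //; first by rewrite in_setD1 eq_sym xw.
  move=> y; rewrite !in_setD1 => /and3P[yw yx yD]; rewrite /par' /reparent.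
  case: eqP => [_|yc].
    have [z pxz zD] := parD x xDw; exists z => //; rewrite in_setD1 zD andbT.
    by apply: contraNneq (st_par_neq stD xDw) => zx; rewrite pxz zx.
  have yDw : y \in D :\ w by rewrite in_setD1 yw.
  have [z pyz zD] := parD y yDw.
  exists z => //; rewrite in_setD1 zD andbT; apply/eqP => zx; apply: yc.
  by apply: children_set1_uniq chx yD _; rewrite pyz zx.
have DxwE : D :\ x :\ w = D :\ w :\ x by rewrite setDDl setUC -setDDl.
move=> C /imsetP[y]; rewrite DxwE => yDwx ->; have [yx yDw] := setD1P yDwx.
have [yCx|yCx] := boolP (y \in Cx).
  have [_ cCx' _ _] := st_inv stC'.
  by rewrite comp_setD1_in ?in_setD1 ?yx //; exists c'.
have notCy u : u \in Cx -> u \notin comp e (D :\ w) y.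
  move=> uCx; apply: contraNN yCx => uCy.
  by rewrite /Cx -(comp_eq uCx) (comp_eq uCy) comp_refl.
have [c'' [c''C pc'' stC'']] := compD _ (comp_components yDw).
have par'E : {in comp e (D :\ w) y, par' =1 par}.
  by move=> u uC; rewrite /par' /reparent ifN //; apply: contraNneq (notCy c cCx) => <-.
have [_ cC'' _ _] := st_inv stC''.
rewrite comp_setD1_out ?notCy ?comp_refl //; exists c''; split => //.
  by rewrite par'E.
by apply: eq_st stC'' => u /setD1P[_ /par'E].
Qed.

(* The condition on [par w] holds at the root of a search tree and at the
   roots of its subtrees; it keeps [w] off the ancestor chain from [v] to [x]. *)
Lemma st_setD1_dominated par x v D w : st e par D w ->
  (forall z, par w = Some z -> z \notin D) ->
  x \in D -> v \in D -> x != v -> cnbhd e D x \subset cnbhd e D v ->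
  connect (parent_in par D) v x ->
  exists c, children D par x = [set c] /\
    st e (reparent par c (par x)) (D :\ x) (if x == w then c else w).
Proof.
move=> stD; elim/st_ind_strong: stD => {}D {}w stD IHcomp wroot xD vD xv hN vx.
have [_ cD _ _] := st_inv stD.
have vDx : v \in D :\ x by rewrite in_setD1 eq_sym xv vD.
have cDx := connected_setD1_dominated cD vDx hN.
have [xw|xw] := eqVneq x w.
  subst w; have [c [chc stc]] := st_setD1_root stD wroot cDx; exists c; split => //.
  by apply: eq_st stc => y /setD1P[yc _]; rewrite /reparent (negbTE yc).
set Cx := comp e (D :\ w) x.
have xDw : x \in D :\ w by rewrite in_setD1 xw.
have [vCx vxCx] := connect_parent_in_comp stD wroot xDw vx.
have [cx [cxC pcx stCx IHx]] := IHcomp _ (comp_components xDw).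
have cxroot z : par cx = Some z -> z \notin Cx.
  by rewrite pcx => -[<-]; apply/negP => /(subsetP (comp_sub _ _)); rewrite setD11.
have CxD : Cx \subset D := subset_trans (comp_sub _ _) (subD1set _ _).
have [c [chCx stCx']] := IHx cxroot (comp_refl xDw) vCx xv (cnbhd_sub_restr CxD hN) vxCx.
have [cCx pcx'] := children_set1_mem chCx.
have chD : children D par x = [set c].
  apply: eq_children_set1 => [||y yD pyx]; [exact: (subsetP CxD) | by [] |].
  exact: children_set1_uniq chCx (st_child_comp stD wroot xDw yD pyx) pyx.
have cDw : c \in D :\ w := subsetP (comp_sub _ _) _ cCx.
have c'Cx : (if x == cx then c else cx) \in Cx :\ x.
  case: eqP => [_|/eqP xcx]; last by rewrite in_setD1 eq_sym xcx.
  rewrite in_setD1 cCx andbT; apply: contraNneq (st_par_neq stD cDw) => cx'.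
  by rewrite pcx' cx'.
have pc' : reparent par c (par x) (if x == cx then c else cx) = Some w.
  case: eqP => [xcx|_]; first by rewrite /reparent eqxx xcx pcx.
  rewrite /reparent ifN //; apply: contraNneq xw => cxc.
  by move: pcx; rewrite cxc pcx' => -[->].
exists c; split => //; exact: st_setD1_nonroot stD xDw cDx chD cCx c'Cx pc' stCx'.
Qed.

Lemma elimE S r par u c : children S par u = [set c] -> par r = None ->
  elim S r par u = (if u == r then c else r, reparent par c (par u)).
Proof.
move=> chu pr; rewrite /elim; case: pickP => [c' c'ch | nochild].
  have /set1P -> : c' \in [set c] by rewrite -chu inE.
  by case: eqP => [->|//]; rewrite pr.
have [cS pcu] := children_set1_mem chu.
by have := nochild c; rewrite /= cS pcu eqxx.
Qed.

End SearchTreeElimination.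

Theorem lemma2p1 (T : finType) (e : rel T)
  (e_sym : symmetric e) (e_irr : irreflexive e)
  (S : {set T}) (x v : T) (r : T) (par : T -> option T) :
  connected e S ->
  x \in S -> v \in S -> x != v ->
  cnbhd e S x \subset cnbhd e S v ->
  search_tree e S r par ->
  descendant par v x ->
  #|children S par x| <= 1 /\
  search_tree e (S :\ x) (elim S r par x).1 (elim S r par x).2.
Proof.
move=> _ xS vS xv hN [pr stS] [k _ upk].
have vx := connect_parent_in_up (conj pr stS) vS upk.
have rroot z : par r = Some z -> z \notin S by rewrite pr.
have [c [chx stx]] := st_setD1_dominated e_sym e_irr stS rroot xS vS xv hN vx.
rewrite (elimE chx pr) chx cards1; split => //=; split => //.
have [cS pcx] := children_set1_mem chx.
case: eqP => [->|_]; rewrite /reparent ?eqxx // ifN //.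
by apply/eqP => rc; move: pcx; rewrite -rc pr.
Qed.
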